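(* For $n\ge0$ let $\alpha_n$ be the finite knock sequence $1^{2^n},2^{2^n},\dots,d^{2^n}$ (knock $2^n$ consecutive times on door $1$, then $2^n$ times on door $2$, ..., then $2^n$ times on door $d$). If all doors of a configuration $\mathcal{C}$ of $d$ doors have the same fundamental distribution, then $$\mathbb{T}_{\mathcal{C}}(\alpha_0\cdot\alpha_1\cdot\alpha_2\cdots)=\Theta(\mathbb{T}_{\mathcal{C}}),$$ with universal constants.
   Context: Dependent doors model. Fix an integer $d\ge 2$ and doors $1,\dots,d$, all initially closed; once a door opens it stays open forever. A configuration $\mathcal{C}$ specifies for each door $i$ a function $\phi_i^{\mathcal{C}}$ mapping every finite nonempty sequence $(X_1,\dots,X_n)$ of subsets of $\{1,\dots,i-1\}$ to $[0,1]$: $\phi_i^{\mathcal{C}}(X_1,\dots,X_n)$ is the probability that door $i$ has opened during $n$ knocks on it, where $X_j$ is the set of open doors among $\{1,\dots,i-1\}$ at the time of the $j$-th knock on door $i$ (so a closed door $i$ opens at its $n$-th knock with conditional probability $(\phi_i(X_1..X_n)-\phi_i(X_1..X_{n-1}))/(1-\phi_i(X_1..X_{n-1}))$, with $\phi_i$ of the empty sequence equal to $0$). Configurations are assumed monotone ($\phi_i(X')\le\phi_i(X)$ whenever $X'$ is a, not necessarily consecutive, subsequence of $X$) and positively correlated ($\phi_i(X'_1,\dots,X'_n)\le\phi_i(X_1,\dots,X_n)$ whenever $X'_j\subseteq X_j$ for all $j$). The fundamental distribution of door $i$ is $p_i(n)=1-\phi_i(\{1,\dots,i-1\}^n)$ ($p_i(0)=1$),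 and $E_i=\sum_{n\ge0}p_i(n)$ is assumed finite. A knock sequence $\pi$ is an infinite sequence of door indices, executed in order without any feedback; $\mathbb{T}_{\mathcal{C}}(\pi)$ is the expected number of knocks until all $d$ doors are open, and $\mathbb{T}_{\mathcal{C}}=\inf_\pi \mathbb{T}_{\mathcal{C}}(\pi)$. *)

From HB Require Import structures.
From mathcomp Require Import all_boot all_order all_algebra.
From mathcomp Require Import all_classical all_reals all_analysis.
Set Implicit Arguments. Unset Strict Implicit. Unset Printing Implicit Defensive.
Import Order.TTheory GRing.Theory Num.Theory.
Local Open Scope ring_scope.

(* Doors 1..d of the paper are represented by the ordinals 0..d-1 : 'I_d
   (paper door i+1 <-> ordinal i).  A configuration is given by the family
   phi i : seq {set 'I_d} -> R ; phi i [:: X_1; ...; X_n] is the probability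
   that door i has opened during n knocks on it, X_j being the set of open
   doors among the lower-indexed doors at the j-th knock. *)

Section DoorModel.
Variables (R : realType) (d : nat).

Definition noopen : {set 'I_d} := finset.set0.

Definition below (i : 'I_d) : {set 'I_d} := [set j : 'I_d | (j < i)%N].

Definition seq_below (i : 'I_d) (xs : seq {set 'I_d}) : bool :=
  all (fun X : {set 'I_d} => X \subset below i) xs.

Definition valid_config (phi : 'I_d -> seq {set 'I_d} -> R) : Prop :=
  [/\ (forall i, phi i [::] = 0),
      (forall i xs, seq_below i xs -> 0 <= phi i xs <= 1),
      (forall i xs ys, seq_below i xs -> seq_below i ys ->
          subseq ys xs -> phi i ys <= phi i xs) &
      (forall i xs ys, seq_below i xs -> seq_below i ys ->
          all2 (fun Y X : {set 'I_d} => Y \subset X) ys xs -> phi i ys <= phi i xs)].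

Definition fund (phi : 'I_d -> seq {set 'I_d} -> R) (i : 'I_d) (n : nat) : R :=
  1 - phi i (nseq n (below i)).

Definition finite_expectations (phi : 'I_d -> seq {set 'I_d} -> R) : Prop :=
  forall i, (\sum_(0 <= n <oo) (fund phi i n)%:E < +oo)%E.

Definition same_fundamental (phi : 'I_d -> seq {set 'I_d} -> R) : Prop :=
  forall i j n, fund phi i n = fund phi j n.

(* The random process.  A history h = [:: S_1; ...; S_t] lists the sets of
   open doors after each of the first t knocks (S_0 = noopen, the empty set). *)
Section Process.
Variables (phi : 'I_d -> seq {set 'I_d} -> R) (pi : nat -> 'I_d).

Definition hist_at (h : seq {set 'I_d}) (k : nat) : {set 'I_d} :=
  nth noopen (noopen :: h) k.

Definition knock_obs (h : seq {set 'I_d}) (k m : nat) : seq {set 'I_d} :=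
  [seq hist_at h j :&: below (pi k) | j <- iota 0 m & pi j == pi k].

(* conditional probability of the transition S_k -> S_{k+1} at knock k
   (0-based), the knock being on door pi k *)
Definition step_prob (h : seq {set 'I_d}) (k : nat) : R :=
  let i := pi k in
  let prev := hist_at h k in
  let next := hist_at h k.+1 in
  if i \in prev then (next == prev)%:R
  else
    let a := phi i (knock_obs h k k) in
    let b := phi i (knock_obs h k k.+1) in
    let q := (b - a) / (1 - a) in
    if next == i |: prev then q
    else if next == prev then 1 - q else 0.

Definition hist_prob (h : seq {set 'I_d}) : R :=
  \prod_(k < size h) step_prob h k.

Definition prob_all_open (t : nat) : R :=
  \sum_(h : t.-tuple {set 'I_d}) hist_prob h * (last noopen h == [set: 'I_d])%:R.

(* expected number of knocks until all doors are open:
   E[tau] = sum_{t >= 0} P(tau > t) *)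
Definition exp_time : \bar R :=
  (\sum_(0 <= t <oo) (1 - prob_all_open t)%:E)%E.

End Process.

Definition opt_time (phi : 'I_d -> seq {set 'I_d} -> R) : \bar R :=
  ereal_inf (range (exp_time phi)).

End DoorModel.

Definition alpha_block (d n : nat) : seq nat :=
  flatten [seq nseq (2 ^ n) i | i <- iota 0 d].

(* k-th knock (0-based) of alpha_0 . alpha_1 . alpha_2 ... ; the first k+1
   blocks have total length >= k+1, so this is the correct k-th entry. *)
Definition alpha_nat (d k : nat) : nat :=
  nth 0 (flatten [seq alpha_block d n | n <- iota 0 k.+1]) k.

(* the same knock sequence as doors 'I_d (the %% d is a no-op) *)
Definition alpha_knock (d : nat) (hd : (0 < d)%N) : nat -> 'I_d :=
  fun k => Ordinal (ltn_pmod (alpha_nat d k) hd).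

From HB Require Import structures.
From mathcomp Require Import all_boot all_order all_algebra.
From mathcomp Require Import all_classical all_reals all_analysis.
From mathcomp Require Import zify ring lra.
Import Order.TTheory GRing.Theory Num.Theory.
Local Open Scope ring_scope.
Set Implicit Arguments. Unset Strict Implicit. Unset Printing Implicit Defensive.

(* Let [P_pi(t)] be the probability that all doors are open after [t] knocks of
   [pi], and [p] the common fundamental distribution.  Given what happened to the
   doors below [i], door [i] is still closed with probability [1 - phi_i] of its
   observations, which by positive correlation is at least [p] of its number of
   knocks.  Peeling off the doors one at a time gives
   [P_pi(t) <= prod_i (1 - p(K_i(t)))], and since at least half of the doors
   received at most [2t/d] knocks, [P_pi(t) <= (1 - p(2t/d))^(d/2)].
   For [alpha], once the block [alpha_k] with [d (2^(k+1) - 1) <= t] is over, if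
   some door is closed then the first door closed at the end of its window of
   [alpha_k] was knocked [2^k] times with all lower doors open and stayed closed,
   which has probability at most [p(2^k)]; so [1 - P_alpha(t) <= d p(2^k)].
   As [1 - (1 - y)^n >= min(1, n y) / 2], the two bounds combine into
   [1 - P_alpha(t) <= (1 - P_pi(t)) + 4 (1 - P_pi(t/8))], and summing over [t]
   gives [T(alpha) <= 33 T(pi)]; the lower bound holds with constant 1 as [T] is
   an infimum. *)

Lemma big_tuple_rcons (V : nmodType) (T : finType) t (F : seq T -> V) :
  \sum_(h : t.+1.-tuple T) F h = \sum_(h : t.-tuple T) \sum_(S : T) F (rcons h S).
Proof.
rewrite pair_bigA /= (reindex (fun p : t.-tuple T * T => [tuple of rcons p.1 p.2])) //=.
exists (fun u : t.+1.-tuple T =>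
   ([tuple of belast (thead u) (behead u)], last (thead u) (behead u))).
- move=> [h S] _ /=; set u := [tuple of rcons h S].
  have /= := congr1 val (tuple_eta u); rewrite lastI => /rcons_inj[eh eS].
  by congr (_, _) => //; apply: val_inj.
- move=> u _; apply: val_inj => /=.
  by rewrite -lastI; move: (congr1 val (tuple_eta u)) => /= <-.
Qed.

Lemma all2_nseq (T : Type) (r : T -> T -> bool) (s : seq T) x :
  all2 r s (nseq (size s) x) = all (r^~ x) s.
Proof. by elim: s => //= y s ->. Qed.

Section ConditionalProbability.
Variables (F : realFieldType) (a b : F).
Hypotheses (a_ge0 : 0 <= a) (le_ab : a <= b) (b_le1 : b <= 1).

Lemma cond_prob_in01 : 0 <= (b - a) / (1 - a) <= 1.
Proof.
have [->|a_neq1] := eqVneq a 1.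
  by rewrite subrr invr0 mulr0 lexx ler01.
have a_le1 : a <= 1 := le_trans le_ab b_le1.
have a_lt1 : 0 < 1 - a by rewrite subr_gt0 lt_neqAle a_neq1.
by rewrite divr_ge0 ?subr_ge0 //= ler_pdivrMr // mul1r lerD2r.
Qed.

Lemma cond_prob_complE : (1 - a) * (1 - (b - a) / (1 - a)) = 1 - b.
Proof.
have [a1|a_neq1] := eqVneq a 1.
  have b1 : b = 1 by apply/eqP; rewrite eq_le b_le1 -a1.
  by rewrite a1 b1 !subrr mul0r.
have : 1 - a != 0 by rewrite subr_eq0 eq_sym.
by move=> ?; field.
Qed.

End ConditionalProbability.

Lemma exp1B_mul1D_le1 (R : realDomainType) (y : R) n :
  0 <= y <= 1 -> (1 - y) ^+ n * (1 + n%:R * y) <= 1.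
Proof.
move=> /andP[y_ge0 y_le1]; elim: n => [|n IH]; first by rewrite expr0 mul0r addr0 mulr1.
have z_ge0 : 0 <= (1 - y) ^+ n by rewrite exprn_ge0 // subr_ge0.
rewrite exprS -addn1 natrD.
set z := (1 - y) ^+ n in z_ge0 IH *; set N := n%:R in IH *.
have N_ge0 : 0 <= N by rewrite ler0n.
have : 0 <= z * (y * y * (N + 1)) by rewrite !mulr_ge0 // addr_ge0.
have -> : (1 - y) * z * (1 + (N + 1%:R) * y) = z * (1 + N * y) - z * (y * y * (N + 1)) by ring.
lra.
Qed.

Lemma min1_le_success (R : realDomainType) (y F : R) n : 0 <= y <= 1 ->
  F <= 1 -> F <= 2 * (n%:R * y) -> F <= 4 * (1 - (1 - y) ^+ n).
Proof.
move=> y01 F_le1 F_le_ny; have := exp1B_mul1D_le1 n y01.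
case/andP: y01 => y_ge0 y_le1.
have z_ge0 : 0 <= (1 - y) ^+ n by rewrite exprn_ge0 // subr_ge0.
have x_ge0 : 0 <= n%:R * y by rewrite mulr_ge0 ?ler0n.
set z := (1 - y) ^+ n in z_ge0 *; set x := n%:R * y in x_ge0 F_le_ny *.
by case: (lerP x 1) => x_le1; nra.
Qed.

Lemma sum_divn_nat (V : nmodType) (a : nat -> V) k n :
  \sum_(0 <= t < k * n) a (t %/ k)%N = \sum_(0 <= s < n) a s *+ k.
Proof.
elim: n => [|n IH]; first by rewrite muln0 !big_geq.
rewrite (@big_cat_nat _ _ _ (k * n)) ?leq_mul2l ?leqnSn ?orbT //= IH big_nat_recr //=.
congr (_ + _); rewrite (@eq_big_nat _ _ _ _ _ _ (fun=> a n)) => [|t /andP[le_t lt_t]].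
  by rewrite sumr_const_nat mulnSr addKn.
by congr a; apply/eqP; rewrite eqn_leq -ltnS !leq_divRL ?ltn_divLR; lia.
Qed.

Local Open Scope ereal_scope.

Lemma nneseries_divn_le (R : realType) (a : nat -> R) k : (0 < k)%N ->
  (forall n, (0 <= a n)%R) ->
  \sum_(0 <= t <oo) (a (t %/ k)%N)%:E <= k%:R%:E * \sum_(0 <= t <oo) (a t)%:E.
Proof.
move=> k_gt0 a_ge0; rewrite -nneseriesZl; last by move=> i _; rewrite lee_fin.
apply: lime_le; first by apply: is_cvg_nneseries => n _ _; rewrite lee_fin.
apply: nearW => n; apply: le_trans (nneseries_lim_ge n _); last first.
  by move=> i _ _; rewrite -EFinM lee_fin mulr_ge0.
rewrite !sumEFin lee_fin [X in (_ <= X)%R](eq_bigr (fun i => a i *+ k)%R) => [|i _]; last by rewrite mulr_natl.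
rewrite -sum_divn_nat.
rewrite [X in (_ <= X)%R](@big_cat_nat _ _ _ n) ?leq_pmull //= lerDl.
exact: sumr_ge0.
Qed.

Local Close Scope ereal_scope.

(** * Expectations over histories *)

Section Process.
Variables (R : realType) (d : nat) (phi : 'I_d -> seq {set 'I_d} -> R).
Variable pi : nat -> 'I_d.
Local Notation hist := (seq {set 'I_d}).
Local Notation last_open h := (last (noopen d) h).

Lemma hist_at_rcons (h : hist) S j :
  (j <= size h)%N -> hist_at (rcons h S) j = hist_at h j.
Proof. by rewrite /hist_at -rcons_cons nth_rcons /= ltnS => ->. Qed.

Lemma hist_at_rcons_size (h : hist) S : hist_at (rcons h S) (size h).+1 = S.
Proof. by rewrite /hist_at -rcons_cons nth_rcons /= ltnn eqxx. Qed.

Lemma hist_at_size (h : hist) : hist_at h (size h) = last_open h.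
Proof. by rewrite /hist_at (last_nth (noopen d)). Qed.

Lemma knock_obs_rcons (h : hist) S k m :
  (m <= (size h).+1)%N -> knock_obs pi (rcons h S) k m = knock_obs pi h k m.
Proof.
move=> le_m; apply/eq_in_map => j; rewrite mem_filter mem_iota => /and3P[_ _ lt_jm].
by rewrite hist_at_rcons // -ltnS (leq_trans lt_jm).
Qed.

Lemma knock_obs_seq_below (h : hist) k m : seq_below (pi k) (knock_obs pi h k m).
Proof. by apply/allP => X /mapP[j _ ->]; apply: subsetIr. Qed.

Lemma knock_obs_subseq (h : hist) k m :
  subseq (knock_obs pi h k m) (knock_obs pi h k m.+1).
Proof. by rewrite /knock_obs -addn1 iotaD filter_cat map_cat prefix_subseq. Qed.

Lemma step_prob_rcons (h : hist) S k :
  (k < size h)%N -> step_prob phi pi (rcons h S) k = step_prob phi pi h k.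
Proof. by move=> lt_k; rewrite /step_prob !hist_at_rcons ?knock_obs_rcons //; lia. Qed.

Lemma hist_prob_rcons (h : hist) S :
  hist_prob phi pi (rcons h S) = hist_prob phi pi h * step_prob phi pi (rcons h S) (size h).
Proof.
rewrite /hist_prob size_rcons big_ord_recr /=; congr (_ * _).
by apply: eq_bigr => k _; rewrite step_prob_rcons.
Qed.

Definition open_prob (h : hist) : R :=
  let k := size h in
  let a := phi (pi k) (knock_obs pi h k k) in
  (phi (pi k) (knock_obs pi h k k.+1) - a) / (1 - a).

Definition next_expect (h : hist) (f : {set 'I_d} -> R) : R :=
  \sum_S step_prob phi pi (rcons h S) (size h) * f S.

Lemma next_expectE h f : next_expect h f =
  if pi (size h) \in last_open h then f (last_open h)
  else open_prob h * f (pi (size h) |: last_open h) + (1 - open_prob h) * f (last_open h).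
Proof.
rewrite /next_expect.
under eq_bigr => S _ do
  rewrite /step_prob hist_at_rcons // hist_at_size hist_at_rcons_size !knock_obs_rcons //.
rewrite -/(open_prob h) /=; case: ifP => iL.
  rewrite (bigD1 (last_open h)) //= eqxx mul1r big1 ?addr0 // => S /negbTE->.
  by rewrite mul0r.
have neq_iL : pi (size h) |: last_open h != last_open h.
  by apply: contraFN iL => /eqP <-; rewrite setU11.
rewrite (bigD1 (pi (size h) |: last_open h)) //= eqxx.
rewrite (bigD1 (last_open h)) /= 1?eq_sym // (negbTE neq_iL) eqxx addrA big1 ?addr0 //.
by move=> S /andP[/negbTE-> /negbTE->]; rewrite mul0r.
Qed.

Lemma next_expect_lin h a b f g :
  next_expect h (fun S => a * f S + b * g S) = a * next_expect h f + b * next_expect h g.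
Proof. by rewrite !next_expectE; case: ifP => _; ring. Qed.

Lemma next_expectZ h c f : next_expect h (fun S => c * f S) = c * next_expect h f.
Proof. by rewrite !next_expectE; case: ifP => _; ring. Qed.

Lemma next_expect_cst h c : next_expect h (fun=> c) = c.
Proof. by rewrite next_expectE; case: ifP => _; ring. Qed.

Fixpoint hist_expect t (F : hist -> R) : R :=
  if t is t'.+1 then hist_expect t' (fun h => next_expect h (fun S => F (rcons h S)))
  else F [::].

Lemma hist_expectE t (F : hist -> R) :
  \sum_(h : t.-tuple {set 'I_d}) hist_prob phi pi h * F h = hist_expect t F.
Proof.
elim: t F => [|t IH] F /=.
  rewrite (big_pred1 [tuple]) /= ?/hist_prob ?big_ord0 ?mul1r // => u.
  by rewrite [u]tuple0; apply/eqP.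
rewrite (big_tuple_rcons _ (fun h => hist_prob phi pi h * F h)) -IH; apply: eq_bigr => h _.
rewrite /next_expect mulr_sumr; apply: eq_bigr => S _.
by rewrite hist_prob_rcons mulrA.
Qed.

Lemma eq_hist_expect t (F G : hist -> R) :
  (forall h, size h = t -> F h = G h) -> hist_expect t F = hist_expect t G.
Proof.
elim: t F G => [|t IH] F G /= eqFG; first exact: eqFG.
by apply: IH => h h_t; apply: eq_bigr => S _; rewrite eqFG // size_rcons h_t.
Qed.

Lemma hist_expect_lin t a b (F G : hist -> R) :
  hist_expect t (fun h => a * F h + b * G h) = a * hist_expect t F + b * hist_expect t G.
Proof.
elim: t F G => [|t IH] F G //=.
by rewrite -IH; apply: eq_hist_expect => h _; apply: next_expect_lin.
Qed.

Lemma hist_expect_cst t c : hist_expect t (fun=> c) = c.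
Proof.
elim: t => [|t IH] //=; rewrite -[RHS]IH.
by apply: eq_hist_expect => h _; apply: next_expect_cst.
Qed.

Lemma hist_expectZ t a (F : hist -> R) :
  hist_expect t (fun h => a * F h) = a * hist_expect t F.
Proof.
rewrite -[RHS]addr0 -(mul0r (hist_expect t F)) -hist_expect_lin.
by apply: eq_hist_expect => h _; rewrite mul0r addr0.
Qed.

Lemma hist_expectD t (F G : hist -> R) :
  hist_expect t (fun h => F h + G h) = hist_expect t F + hist_expect t G.
Proof.
rewrite -[hist_expect t F]mul1r -[hist_expect t G]mul1r -hist_expect_lin.
by apply: eq_hist_expect => h _; rewrite !mul1r.
Qed.

Lemma hist_expectB t (F G : hist -> R) :
  hist_expect t (fun h => F h - G h) = hist_expect t F - hist_expect t G.
Proof.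
rewrite -[hist_expect t F]mul1r -mulN1r -hist_expect_lin.
by apply: eq_hist_expect => h _; rewrite mul1r mulN1r.
Qed.

Lemma hist_expect_sum t (I : finType) (F : I -> hist -> R) :
  hist_expect t (fun h => \sum_(i : I) F i h) = \sum_(i : I) hist_expect t (F i).
Proof.
suff sum_seq r : hist_expect t (fun h => \sum_(i <- r) F i h) = \sum_(i <- r) hist_expect t (F i).
  exact: sum_seq.
elim: r => [|i r IH].
  by rewrite big_nil -[RHS](hist_expect_cst t); apply: eq_hist_expect => h _; rewrite big_nil.
by rewrite big_cons -IH -hist_expectD; apply: eq_hist_expect => h _; rewrite big_cons.
Qed.

Lemma hist_expect_prefix t e (F : hist -> R) : (e <= t)%N ->
  (forall h S, (e <= size h)%N -> F (rcons h S) = F h) ->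
  hist_expect t F = hist_expect e F.
Proof.
move=> le_et F_prefix; elim: t le_et => [|t IH]; first by rewrite leqn0 => /eqP->.
rewrite leq_eqVlt => /predU1P[-> //|lt_et] /=; rewrite -IH //.
apply: eq_hist_expect => h h_t; rewrite -[RHS](next_expect_cst h).
by apply: eq_bigr => S _; rewrite F_prefix // h_t.
Qed.

Definition nested (h : hist) := path (fun A B : {set 'I_d} => A \subset B) (noopen d) h.

Lemma nested_rcons h S : nested (rcons h S) = nested h && (last_open h \subset S).
Proof. exact: rcons_path. Qed.

Lemma nested_hist_at h j j' : nested h -> (j <= j' <= size h)%N ->
  hist_at h j \subset hist_at h j'.
Proof.
move=> h_nested /andP[le_jj' le_j'h].
have subset_trans : transitive (fun A B : {set 'I_d} => A \subset B).
  by move=> B A C; apply: fintype.subset_trans.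
have subset_refl : reflexive (fun A B : {set 'I_d} => A \subset B) by move=> A; apply: subxx.
have := sorted_leq_nth subset_trans subset_refl (noopen d) (s := noopen d :: h) h_nested.
by apply; rewrite ?inE ?ltnS // (leq_trans le_jj').
Qed.

Lemma seq_below_nseq (i : 'I_d) n : seq_below i (nseq n (below i)).
Proof. by rewrite /seq_below all_nseq subxx orbT. Qed.

Hypothesis phi_valid : valid_config phi.

Lemma phi_nil i : phi i [::] = 0.
Proof. by case: phi_valid. Qed.

Lemma phi_in01 i xs : seq_below i xs -> 0 <= phi i xs <= 1.
Proof. by case: phi_valid => _ phi01 _ _; apply: phi01. Qed.

Lemma phi_subseq i xs ys : seq_below i xs -> seq_below i ys ->
  subseq ys xs -> phi i ys <= phi i xs.
Proof. by case: phi_valid => _ _ phi_mono _; apply: phi_mono. Qed.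

Lemma phi_subset i xs ys : seq_below i xs -> seq_below i ys ->
  all2 (fun Y X : {set 'I_d} => Y \subset X) ys xs -> phi i ys <= phi i xs.
Proof. by case: phi_valid => _ _ _ phi_corr; apply: phi_corr. Qed.

Lemma fund_in01 i n : 0 <= fund phi i n <= 1.
Proof.
have /andP[phi_ge0 phi_le1] := phi_in01 (seq_below_nseq i n).
by rewrite /fund subr_ge0 phi_le1 lerBlDr lerDl.
Qed.

Lemma open_prob_in01 h : 0 <= open_prob h <= 1.
Proof.
have /andP[a_ge0 _] := phi_in01 (knock_obs_seq_below h (size h) (size h)).
have /andP[_ b_le1] := phi_in01 (knock_obs_seq_below h (size h) (size h).+1).
have le_ab := phi_subseq (knock_obs_seq_below _ _ _) (knock_obs_seq_below _ _ _)
  (knock_obs_subseq h (size h) (size h)).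
exact: cond_prob_in01.
Qed.

Lemma ler_next_expect h f g : f (last_open h) <= g (last_open h) ->
  (pi (size h) \notin last_open h ->
     f (pi (size h) |: last_open h) <= g (pi (size h) |: last_open h)) ->
  next_expect h f <= next_expect h g.
Proof.
move=> le_fg_stay le_fg_open; rewrite !next_expectE; case: ifP => // iL.
have /andP[q_ge0 q_le1] := open_prob_in01 h.
by rewrite lerD // ler_wpM2l ?subr_ge0 // le_fg_open ?iL.
Qed.

Lemma ler_hist_expect t (F G : hist -> R) :
  (forall h, size h = t -> nested h -> F h <= G h) -> hist_expect t F <= hist_expect t G.
Proof.
elim: t F G => [|t IH] F G /= le_FG; first exact: le_FG.
apply: IH => h h_t h_nested; apply: ler_next_expect => [|_];
  by apply: le_FG; rewrite ?size_rcons ?h_t // nested_rcons h_nested ?subxx ?finset.subsetUr.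
Qed.

Lemma fund_nonincreasing i m n : (m <= n)%N -> fund phi i n <= fund phi i m.
Proof.
move=> le_mn; rewrite /fund lerD2l lerN2 phi_subseq ?seq_below_nseq //.
by rewrite -(subnKC le_mn) nseqD prefix_subseq.
Qed.

(** * Conditioning on the doors below a door *)

Section Door.
Variable i : 'I_d.

Definition below_part (h : hist) : hist := map (fun S => S :&: below i) h.

Definition door_obs (h : hist) m : hist :=
  [seq hist_at h j :&: below i | j <- iota 0 m & pi j == i].

Definition door_phi (h : hist) : R := phi i (door_obs h (size h)).

Definition door_open_prob (h : hist) : R :=
  (phi i (door_obs h (size h).+1) - door_phi h) / (1 - door_phi h).

Definition below_measurable (g : hist -> R) : Prop :=
  forall h1 h2, below_part h1 = below_part h2 -> g h1 = g h2.

Lemma hist_at_below_part h j : hist_at (below_part h) j = hist_at h j :&: below i.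
Proof.
have noopenI : noopen d :&: below i = noopen d by exact: finset.set0I.
rewrite /hist_at /below_part -[in LHS]noopenI -(map_cons (fun S => S :&: below i)).
case: (ltnP j (size h).+1) => [lt_jh|le_hj]; first by rewrite (nth_map (noopen d)).
by rewrite !nth_default ?size_map.
Qed.

Lemma below_part_hist_at h1 h2 j : below_part h1 = below_part h2 ->
  hist_at h1 j :&: below i = hist_at h2 j :&: below i.
Proof. by move=> eq_h; rewrite -!hist_at_below_part eq_h. Qed.

Lemma below_part_size h1 h2 : below_part h1 = below_part h2 -> size h1 = size h2.
Proof. by move=> /(congr1 size); rewrite !size_map. Qed.

Lemma below_part_rcons h S : below_part (rcons h S) = rcons (below_part h) (S :&: below i).
Proof. exact: map_rcons. Qed.

Lemma below_part_last h1 h2 : below_part h1 = below_part h2 ->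
  last_open h1 :&: below i = last_open h2 :&: below i.
Proof. by move=> eq_h; rewrite -!hist_at_size -(below_part_size eq_h) (below_part_hist_at _ eq_h). Qed.

Lemma setU1I_below (j : 'I_d) P : ~~ (j < i)%N -> (j |: P) :&: below i = P :&: below i.
Proof.
move=> j_ge_i; rewrite finset.setIUl -[RHS]finset.set0U; congr (_ :|: _).
by apply/setP => x; rewrite !inE; case: eqP => // ->; rewrite (negbTE j_ge_i).
Qed.

Lemma door_obs_seq_below h m : seq_below i (door_obs h m).
Proof. by apply/allP => X /mapP[j _ ->]; apply: subsetIr. Qed.

Lemma door_obs_rcons h S m : (m <= (size h).+1)%N -> door_obs (rcons h S) m = door_obs h m.
Proof.
move=> le_m; apply/eq_in_map => j; rewrite mem_filter mem_iota => /and3P[_ _ lt_jm].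
by rewrite hist_at_rcons // -ltnS (leq_trans lt_jm).
Qed.

Lemma door_obs_succ_other h m : pi m != i -> door_obs h m.+1 = door_obs h m.
Proof. by move=> ne_mi; rewrite /door_obs -addn1 iotaD filter_cat /= (negbTE ne_mi) cats0. Qed.

Lemma door_obs_below_part h1 h2 m : below_part h1 = below_part h2 ->
  door_obs h1 m = door_obs h2 m.
Proof. by move=> eq_h; apply: eq_map => j; apply: below_part_hist_at. Qed.

Lemma door_phi_rcons h S : door_phi (rcons h S) = phi i (door_obs h (size h).+1).
Proof. by rewrite /door_phi size_rcons door_obs_rcons. Qed.

Lemma knock_obs_door h k m : pi k = i -> knock_obs pi h k m = door_obs h m.
Proof. by move=> k_i; rewrite /knock_obs k_i. Qed.

Lemma open_prob_door h : pi (size h) = i -> open_prob h = door_open_prob h.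
Proof. by move=> k_i; rewrite /open_prob /door_open_prob /door_phi /= !knock_obs_door // k_i. Qed.

Lemma open_prob_below_part h1 h2 : (pi (size h1) <= i)%N ->
  below_part h1 = below_part h2 -> open_prob h1 = open_prob h2.
Proof.
move=> le_ki eq_h; rewrite /open_prob -(below_part_size eq_h).
have below_sub : below (pi (size h1)) \subset below i.
  by apply/fintype.subsetP => x; rewrite !inE => /leq_trans; apply.
have eq_obs m : knock_obs pi h1 (size h1) m = knock_obs pi h2 (size h1) m.
  apply: eq_map => j; rewrite -(finset.setIidPr below_sub) !finset.setIA.
  by rewrite (below_part_hist_at j eq_h).
by rewrite !eq_obs.
Qed.

Lemma door_phi_step h :
  (1 - door_phi h) * (1 - door_open_prob h) = 1 - phi i (door_obs h (size h).+1).
Proof.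
have /andP[a_ge0 _] := phi_in01 (door_obs_seq_below h (size h)).
have /andP[_ b_le1] := phi_in01 (door_obs_seq_below h (size h).+1).
have le_ab : door_phi h <= phi i (door_obs h (size h).+1).
  apply: phi_subseq; rewrite ?door_obs_seq_below //.
  by rewrite /door_obs -addn1 iotaD filter_cat map_cat prefix_subseq.
exact: cond_prob_complE.
Qed.

Lemma next_expect_door_self h g : pi (size h) = i ->
  next_expect h (fun S => (i \notin last_open (rcons h S))%:R * g (rcons h S)) =
  (i \notin last_open h)%:R * ((1 - door_open_prob h) * g (rcons h (last_open h))).
Proof.
move=> k_i; rewrite next_expectE !last_rcons k_i.
case: ifP => iL; first by rewrite iL !mul0r.
by rewrite setU11 iL (open_prob_door k_i) /=; ring.
Qed.

Lemma next_expect_door_other h g : pi (size h) != i ->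
  next_expect h (fun S => (i \notin last_open (rcons h S))%:R * g (rcons h S)) =
  (i \notin last_open h)%:R * next_expect h (fun S => g (rcons h S)).
Proof.
move=> ne_ki; rewrite !next_expectE !last_rcons; case: ifP => // _.
by rewrite in_setU1 eq_sym (negbTE ne_ki) /=; ring.
Qed.

Lemma below_measurable_next_expect g : below_measurable g ->
  below_measurable (fun h => next_expect h (fun S => g (rcons h S))).
Proof.
move=> g_meas h1 h2 eq_h; rewrite !next_expectE -(below_part_size eq_h).
have eq_last := below_part_last eq_h; set j := pi (size h1).
have g_stay : g (rcons h1 (last_open h1)) = g (rcons h2 (last_open h2)).
  by apply: g_meas; rewrite !below_part_rcons eq_h eq_last.
have g_open : g (rcons h1 (j |: last_open h1)) = g (rcons h2 (j |: last_open h2)).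
  by apply: g_meas; rewrite !below_part_rcons eq_h !finset.setIUl eq_last.
have [lt_ji|le_ij] := ltnP j i.
  have -> : (j \in last_open h2) = (j \in last_open h1).
    by have := congr1 (fun A : {set 'I_d} => j \in A) eq_last; rewrite /= !inE lt_ji !andbT.
  by rewrite (open_prob_below_part (ltnW lt_ji) eq_h) g_stay g_open.
have g_open_stay : g (rcons h1 (j |: last_open h1)) = g (rcons h1 (last_open h1)).
  by apply: g_meas; rewrite !below_part_rcons setU1I_below // -leqNgt.
rewrite -g_open g_open_stay g_stay.
by case: ifP; case: ifP => _ _; ring.
Qed.

(* Given the history of the doors below [i], door [i] is still closed with
   conditional probability [1 - door_phi].  A knock on [i] multiplies this by
   [1 - door_open_prob] (door_phi_step); other knocks leave it unchanged. *)
Lemma hist_expect_door_closed t g : below_measurable g ->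
  hist_expect t (fun h => (i \notin last_open h)%:R * g h) =
  hist_expect t (fun h => (1 - door_phi h) * g h).
Proof.
elim: t g => [|t IH] g g_meas /=.
  by rewrite /door_phi /door_obs /= /noopen finset.in_set0 phi_nil subr0.
have [t_i|t_not_i] := eqVneq (pi t) i.
  pose g1 h := (1 - door_open_prob h) * g (rcons h (last_open h)).
  have g1_meas : below_measurable g1.
    move=> h1 h2 eq_h; rewrite /g1 /door_open_prob /door_phi (below_part_size eq_h).
    rewrite !(door_obs_below_part _ eq_h); congr (_ * _).
    by apply: g_meas; rewrite !below_part_rcons eq_h (below_part_last eq_h).
  transitivity (hist_expect t (fun h => (i \notin last_open h)%:R * g1 h)).
    by apply: eq_hist_expect => h h_t; rewrite next_expect_door_self // h_t.
  rewrite IH //; apply: eq_hist_expect => h h_t.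
  have g_open : g (rcons h (i |: last_open h)) = g (rcons h (last_open h)).
    by apply: g_meas; rewrite !below_part_rcons setU1I_below ?ltnn.
  rewrite next_expectE !door_phi_rcons /g1 mulrA door_phi_step h_t t_i g_open.
  by case: ifP => _; ring.
pose G h := next_expect h (fun S => g (rcons h S)).
transitivity (hist_expect t (fun h => (i \notin last_open h)%:R * G h)).
  by apply: eq_hist_expect => h h_t; rewrite next_expect_door_other // h_t.
rewrite IH; last exact: below_measurable_next_expect.
apply: eq_hist_expect => h h_t; rewrite /G -next_expectZ; congr next_expect.
by apply/funext => S; rewrite door_phi_rcons door_obs_succ_other // h_t.
Qed.

End Door.

Definition knock_count (i : 'I_d) t : nat := count (fun k => pi k == i) (iota 0 t).

Lemma door_phi_le_fund i h : door_phi i h <= 1 - fund phi i (knock_count i (size h)).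
Proof.
rewrite /fund opprB addrC subrK; apply: phi_subset; rewrite ?seq_below_nseq ?door_obs_seq_below //.
have -> : knock_count i (size h) = size (door_obs i h (size h)) by rewrite size_map size_filter.
by rewrite all2_nseq; apply/allP => X /mapP[j _ ->]; apply: subsetIr.
Qed.

Definition lower_open j (h : hist) : R := \prod_(i : 'I_d | (i < j)%N) (i \in last_open h)%:R.

Lemma lower_open_ge0 j h : 0 <= lower_open j h.
Proof. by apply: prodr_ge0 => i _; rewrite ler0n. Qed.

Lemma below_measurable_lower_open (i : 'I_d) j : (j <= i)%N -> below_measurable i (lower_open j).
Proof.
move=> le_ji h1 h2 eq_h; apply: eq_bigr => k lt_kj.
have := congr1 (fun A : {set 'I_d} => k \in A) (below_part_last eq_h).
by rewrite /= !inE (leq_trans lt_kj le_ji) !andbT => ->.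
Qed.

Lemma lower_open_all h : lower_open d h = (last_open h == [set: 'I_d])%:R.
Proof.
rewrite /lower_open (eq_bigl predT) => [|i]; last by rewrite ltn_ord.
have [->|not_all] := eqVneq (last_open h) [set: 'I_d].
  by rewrite big1 // => i _; rewrite finset.in_setT.
have /subsetPn[i _ i_closed] : ~~ ([set: 'I_d] \subset last_open h) by rewrite finset.subTset.
by rewrite (bigD1 i) //= (negbTE i_closed) mul0r.
Qed.

(* Induction on the number of doors: the conditioning identity peels off door [j]
   and positive correlation bounds its conditional probability of being open. *)
Lemma hist_expect_lower_open_le t j : (j <= d)%N ->
  hist_expect t (lower_open j) <= \prod_(i : 'I_d | (i < j)%N) (1 - fund phi i (knock_count i t)).
Proof.
elim: j => [|j IH] le_jd.
  rewrite big_pred0 // -(hist_expect_cst t 1); apply: ler_hist_expect => h _ _.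
  by rewrite /lower_open big_pred0.
pose J := Ordinal le_jd.
have prod_lowerS (F : 'I_d -> R) :
    \prod_(i : 'I_d | (i < j.+1)%N) F i = F J * \prod_(i : 'I_d | (i < j)%N) F i.
  rewrite (bigD1 J) //=; congr (_ * _); apply: eq_bigl => i.
  by rewrite ltnS leq_eqVlt -val_eqE /=; case: ltngtP.
have -> : hist_expect t (lower_open j.+1) = hist_expect t (fun h => door_phi J h * lower_open j h).
  rewrite (eq_hist_expect (G := fun h =>
      lower_open j h - (J \notin last_open h)%:R * lower_open j h)); last first.
    by move=> h _; rewrite /lower_open prod_lowerS; case: (J \in _) => /=; ring.
  rewrite hist_expectB hist_expect_door_closed; last exact: below_measurable_lower_open.
  by rewrite -hist_expectB; apply: eq_hist_expect => h _; ring.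
rewrite prod_lowerS (@le_trans _ _
    (hist_expect t (fun h => (1 - fund phi J (knock_count J t)) * lower_open j h))) //.
  apply: ler_hist_expect => h h_t _.
  by rewrite ler_wpM2r ?lower_open_ge0 // -h_t door_phi_le_fund.
rewrite hist_expectZ ler_wpM2l ?IH ?(ltnW le_jd) //.
by have /andP[_] := fund_in01 J (knock_count J t); rewrite subr_ge0.
Qed.

Lemma prob_all_openE t :
  prob_all_open phi pi t = hist_expect t (fun h => (last_open h == [set: 'I_d])%:R).
Proof. exact: hist_expectE. Qed.

Lemma prob_all_open_in01 t : 0 <= prob_all_open phi pi t <= 1.
Proof.
rewrite prob_all_openE; apply/andP; split.
  by rewrite -(hist_expect_cst t 0) ler_hist_expect // => h _ _; rewrite ler0n.
by rewrite -[X in _ <= X](hist_expect_cst t 1) ler_hist_expect // => h _ _; rewrite lern1 leq_b1.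
Qed.

Lemma prob_all_open_le_prod t :
  prob_all_open phi pi t <= \prod_(i : 'I_d) (1 - fund phi i (knock_count i t)).
Proof.
rewrite prob_all_openE (eq_bigl (fun i : 'I_d => (i < d)%N)) => [|i]; last by rewrite ltn_ord.
rewrite -(eq_hist_expect (F := lower_open d)) ?hist_expect_lower_open_le // => h _.
exact: lower_open_all.
Qed.

Lemma first_closed_door h (b : 'I_d -> nat) m : nested h ->
  (forall i j : 'I_d, (j < i)%N -> (b j + m <= b i)%N) -> (forall i, (b i + m <= size h)%N) ->
  (1 - (last_open h == [set: 'I_d])%:R : R) <=
  \sum_(i : 'I_d) (i \notin hist_at h (b i + m))%:R * (below i \subset hist_at h (b i))%:R.
Proof.
move=> h_nested b_sorted b_le.
have summand_ge0 (i : 'I_d) : (0 : R) <= (i \notin hist_at h (b i + m))%:R *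
    (below i \subset hist_at h (b i))%:R by rewrite mulr_ge0 ?ler0n.
case: eqP => [_|/eqP not_all]; first by rewrite subrr sumr_ge0.
have /subsetPn[c _ c_closed] : ~~ ([set: 'I_d] \subset last_open h) by rewrite finset.subTset.
have c_closed_early : c \notin hist_at h (b c + m).
  apply: contra c_closed => c_open; rewrite -hist_at_size.
  by apply: (fintype.subsetP (nested_hist_at h_nested _)) c_open; rewrite b_le leqnn.
case: (@arg_minnP _ c (fun i => i \notin hist_at h (b i + m)) val c_closed_early).
move=> i0 i0_closed i0_min.
have i0_lower_open : below i0 \subset hist_at h (b i0).
  apply/fintype.subsetP => j; rewrite inE => lt_ji0.
  have j_open : j \in hist_at h (b j + m).
    by apply: contraT => /i0_min; rewrite leqNgt lt_ji0.
  apply: (fintype.subsetP (nested_hist_at h_nested _)) j_open.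
  by rewrite b_sorted // (leq_trans (leq_addr _ _) (b_le i0)).
rewrite subr0 (bigD1 i0) //= i0_closed i0_lower_open mulr1 lerDl.
exact: sumr_ge0.
Qed.

Lemma door_obs_window (i : 'I_d) h b m : nested h -> (b + m <= size h)%N ->
  (forall k, (b <= k < b + m)%N -> pi k = i) -> below i \subset hist_at h b ->
  door_obs i h (b + m) = door_obs i h b ++ nseq m (below i).
Proof.
move=> h_nested le_h knocks_i i_lower_open.
rewrite /door_obs iotaD filter_cat map_cat add0n; congr (_ ++ _).
have -> : [seq k <- iota b m | pi k == i] = iota b m.
  by apply/all_filterP/allP => k; rewrite mem_iota => /knocks_i ->.
apply: (eq_from_nth (x0 := below i)); first by rewrite size_map size_iota size_nseq.
move=> k; rewrite size_map size_iota => lt_km.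
rewrite nth_nseq lt_km (nth_map 0%N) ?size_iota // nth_iota //.
apply/finset.setIidPr/(fintype.subset_trans i_lower_open)/nested_hist_at => //.
by rewrite leq_addr (leq_trans _ le_h) // leq_add2l ltnW.
Qed.

Lemma window_fail_le (i : 'I_d) t b m : (forall k, (b <= k < b + m)%N -> pi k = i) ->
  (b + m <= t)%N ->
  hist_expect t (fun h => (i \notin hist_at h (b + m))%:R * (below i \subset hist_at h b)%:R)
  <= fund phi i m.
Proof.
move=> knocks_i le_t.
pose lower_open_at h : R := (below i \subset hist_at h b)%:R.
rewrite (hist_expect_prefix le_t); last first.
  by move=> h S le_h; rewrite !hist_at_rcons // (leq_trans (leq_addr _ _) le_h).
rewrite (eq_hist_expect (G := fun h => (i \notin last_open h)%:R * lower_open_at h)); last first.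
  by move=> h <-; rewrite hist_at_size.
rewrite hist_expect_door_closed; last first.
  move=> h1 h2 eq_h; rewrite /lower_open_at.
  have subI (X : {set 'I_d}) : (below i \subset X) = (below i \subset X :&: below i).
    by rewrite finset.subsetI subxx andbT.
  by rewrite subI (below_part_hist_at _ eq_h) -subI.
rewrite -(hist_expect_cst (b + m) (fund phi i m)); apply: ler_hist_expect => h h_size h_nested.
rewrite /lower_open_at; case i_lower_open: (below i \subset hist_at h b); last first.
  by rewrite mulr0; have /andP[] := fund_in01 i m.
rewrite mulr1 /fund lerD2l lerN2 /door_phi h_size.
apply: phi_subseq; [exact: door_obs_seq_below | exact: seq_below_nseq |].
by rewrite door_obs_window ?h_size // suffix_subseq.
Qed.

Lemma not_all_open_le_windows t (b : 'I_d -> nat) m :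
  (forall (i : 'I_d) k, (b i <= k < b i + m)%N -> pi k = i) ->
  (forall i j : 'I_d, (j < i)%N -> (b j + m <= b i)%N) ->
  (forall i, (b i + m <= t)%N) ->
  1 - prob_all_open phi pi t <= \sum_(i : 'I_d) fund phi i m.
Proof.
move=> knocks b_sorted b_le.
rewrite prob_all_openE -[X in X - _](hist_expect_cst t) -hist_expectB.
pose window_fail i h : R :=
  (i \notin hist_at h (b i + m))%:R * (below i \subset hist_at h (b i))%:R.
apply: (le_trans (ler_hist_expect (G := fun h => \sum_i window_fail i h) _)).
  by move=> h h_t h_nested; apply: first_closed_door => // i; rewrite h_t.
by rewrite hist_expect_sum; apply: ler_sum => i _; apply: window_fail_le (knocks i) (b_le i).
Qed.

End Process.

(** * The knock sequence alpha *)

Lemma size_flatten_nseq c a n : size (flatten [seq nseq c x | x <- iota a n]) = (n * c)%N.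
Proof. by elim: n a => [|n IH] a //=; rewrite size_cat size_nseq IH mulSn. Qed.

Lemma nth_flatten_nseq c a n i r : (i < n)%N -> (r < c)%N ->
  nth 0%N (flatten [seq nseq c x | x <- iota a n]) (i * c + r) = (a + i)%N.
Proof.
elim: n a i => [|n IH] a [|i] //= lt_in lt_rc; first by rewrite nth_cat size_nseq lt_rc nth_nseq lt_rc addn0.
rewrite nth_cat size_nseq mulSn -addnA ltnNge leq_addr /= addKn IH //.
by rewrite addSnnS.
Qed.

Lemma size_alpha_block d n : size (alpha_block d n) = (d * 2 ^ n)%N.
Proof. exact: size_flatten_nseq. Qed.

Lemma size_alpha_blocks d k :
  size (flatten [seq alpha_block d n | n <- iota 0 k]) = (d * (2 ^ k - 1))%N.
Proof.
elim: k => [|k IH]; first by rewrite muln0.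
rewrite -addn1 iotaD map_cat flatten_cat size_cat IH /= cats0 size_alpha_block add0n.
rewrite -mulnDr addn1 expnS; congr (d * _).
by have := expn_gt0 2 k; set x := (2 ^ k)%N; lia.
Qed.

Lemma alpha_nat_block d k i r : (i < d)%N -> (r < 2 ^ k)%N ->
  alpha_nat d (d * (2 ^ k - 1) + i * 2 ^ k + r) = i.
Proof.
move=> lt_id lt_r; set s := (d * (2 ^ k - 1) + i * 2 ^ k + r)%N.
have le_ks : (k <= s)%N.
  have := ltn_expl k (isT : (1 < 2)%N); rewrite /s; set x := (2 ^ k)%N; nia.
rewrite /alpha_nat.
have -> : iota 0 s.+1 = iota 0 k ++ k :: iota k.+1 (s - k).
  by rewrite -[s.+1](subnKC (leqW le_ks)) iotaD add0n subSn.
rewrite map_cat flatten_cat nth_cat size_alpha_blocks /s -addnA ltnNge leq_addr /=.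
rewrite addKn nth_cat size_alpha_block ifT; last by set x := (2 ^ k)%N in lt_r *; nia.
by rewrite nth_flatten_nseq.
Qed.

Lemma alpha_knock_block d (d_gt0 : (0 < d)%N) k (i : 'I_d) r : (r < 2 ^ k)%N ->
  alpha_knock d_gt0 (d * (2 ^ k - 1) + i * 2 ^ k + r) = i.
Proof. by move=> lt_r; apply: val_inj; rewrite /= alpha_nat_block // modn_small. Qed.

(** * Comparison with an arbitrary knock sequence *)

Section Comparison.
Variables (R : realType) (d : nat) (phi : 'I_d -> seq {set 'I_d} -> R) (p : nat -> R).
Hypotheses (phi_valid : valid_config phi) (fund_p : forall i n, fund phi i n = p n).
Hypothesis d_gt0 : (0 < d)%N.
Local Notation alpha := (alpha_knock d_gt0).

Lemma p_in01 n : 0 <= p n <= 1.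
Proof. by rewrite -(fund_p (Ordinal d_gt0)) fund_in01. Qed.

Lemma p_nonincreasing m n : (m <= n)%N -> p n <= p m.
Proof. by rewrite -!(fund_p (Ordinal d_gt0)); apply: fund_nonincreasing. Qed.

Lemma not_all_open_ge0 pi t : 0 <= 1 - prob_all_open phi pi t.
Proof. by have /andP[_] := prob_all_open_in01 pi phi_valid t; rewrite subr_ge0. Qed.

Lemma not_all_open_le1 pi t : 1 - prob_all_open phi pi t <= 1.
Proof. by have /andP[? _] := prob_all_open_in01 pi phi_valid t; rewrite lerBlDr lerDl. Qed.

Lemma alpha_not_all_open_le t k : (d * (2 ^ k.+1 - 1) <= t)%N ->
  1 - prob_all_open phi alpha t <= d%:R * p (2 ^ k).
Proof.
move=> le_t; have := expn_gt0 2 k; set x := (2 ^ k)%N => x_gt0.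
have -> : d%:R * p x = \sum_(i : 'I_d) fund phi i x.
  by rewrite (eq_bigr _ (fun i _ => fund_p i x)) sumr_const card_ord mulr_natl.
apply: (@not_all_open_le_windows _ _ _ _ phi_valid t (fun i : 'I_d => d * (x - 1) + i * x)%N).
- move=> i s /andP[le_s lt_s]; rewrite -(subnKC le_s) alpha_knock_block //.
  by rewrite ltn_subLR // addnC.
- by move=> i j lt_ji; nia.
- by move=> i; move: le_t; rewrite expnS -/x; have := ltn_ord i; nia.
Qed.

Lemma sum_knock_count pi s : (\sum_(i : 'I_d) knock_count pi i s)%N = s.
Proof.
elim: s => [|s IH]; first by rewrite big1.
rewrite /knock_count -addn1 iotaD add0n.
under eq_bigr => i _ do rewrite count_cat /= addn0.
by rewrite big_split /= IH (bigD1 (pi s)) //= eqxx big1 ?addn0 // => i /negbTE; rewrite eq_sym => ->.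
Qed.

Definition rare_doors pi s := [set i : 'I_d | (knock_count pi i s * d <= 2 * s)%N].

(* Markov's inequality for the knock counts, which sum to [s]. *)
Lemma card_rare_doors pi s : (d <= 2 * #|rare_doors pi s|)%N.
Proof.
have knocks_frequent : (#|~: rare_doors pi s| * (2 * s).+1 <= s * d)%N.
  rewrite -sum_nat_const.
  apply: (@leq_trans (\sum_(i in ~: rare_doors pi s) knock_count pi i s * d)).
    by apply: leq_sum => i; rewrite !inE -ltnNge.
  rewrite -[in X in (_ <= X * d)%N](sum_knock_count pi s) big_distrl /=.
  by rewrite [X in (_ <= X)%N](bigID (mem (~: rare_doors pi s))) /=; apply: leq_addr.
have := cardsC (rare_doors pi s); rewrite card_ord; nia.
Qed.

Lemma prob_all_open_le_rare pi s :
  prob_all_open phi pi s <= (1 - p ((2 * s) %/ d)) ^+ #|rare_doors pi s|.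
Proof.
have fundC01 i n : 0 <= 1 - fund phi i n <= 1.
  have /andP[f_ge0 f_le1] := fund_in01 phi_valid i n.
  by rewrite subr_ge0 f_le1 lerBlDr lerDl.
apply: (le_trans (prob_all_open_le_prod pi phi_valid s)).
rewrite (bigID (mem (rare_doors pi s))) /= -[X in _ <= X]mulr1.
apply: ler_pM; do ?[by apply: prodr_ge0 => i _; case/andP: (fundC01 i (knock_count pi i s))].
  rewrite -prodr_const; apply: ler_prod => i i_rare.
  rewrite (andP (fundC01 _ _)).1 lerD2l lerN2 fund_p p_nonincreasing // leq_divRL //.
  by move: i_rare; rewrite inE.
by apply: prodr_ile1 => i _; apply: fundC01.
Qed.

Lemma not_all_open_lower pi s F : F <= 1 -> F <= d%:R * p ((2 * s) %/ d) ->
  F <= 4 * (1 - prob_all_open phi pi s).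
Proof.
move=> F_le1 F_le; have p01 := p_in01 ((2 * s) %/ d).
have F_le_rare : F <= 2 * (#|rare_doors pi s|%:R * p ((2 * s) %/ d)).
  apply: le_trans F_le _; rewrite mulrA -natrM ler_wpM2r ?ler_nat ?card_rare_doors //.
  by case/andP: p01.
apply: le_trans (min1_le_success p01 F_le1 F_le_rare) _.
by rewrite ler_wpM2l // lerD2l lerN2 prob_all_open_le_rare.
Qed.

Lemma prob_all_open_lt_d pi t : (t < d)%N -> prob_all_open phi pi t = 0.
Proof.
move=> lt_td; apply/eqP; rewrite eq_le (andP (prob_all_open_in01 pi phi_valid t)).1 andbT.
have /existsP[i /eqP unknocked] : [exists i, knock_count pi i t == 0%N].
  apply: contraTT lt_td => /existsPn knocked; rewrite -leqNgt -[X in (X <= _)%N]card_ord.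
  rewrite -sum1_card (leq_trans _ (eq_leq (sum_knock_count pi t))) //.
  by apply: leq_sum => i _; rewrite lt0n knocked.
apply: le_trans (prob_all_open_le_prod pi phi_valid t) _.
by rewrite (bigD1 i) //= unknocked /fund phi_nil // subr0 subrr mul0r.
Qed.

Lemma alpha_phase t : (d <= t)%N ->
  exists k, (d * (2 ^ k.+1 - 1) <= t)%N /\ ((2 * (t %/ 8)) %/ d <= 2 ^ k)%N.
Proof.
move=> le_dt; have q_gt0 : (0 < t %/ d)%N by rewrite divn_gt0.
have := leq_divM t d; have := ltn_ceil t d_gt0.
set q := (t %/ d)%N in q_gt0 *; clearbody q => lt_t le_t.
have := trunc_logP (isT : (1 < 2)%N) (ltn0Sn q); have := trunc_log_ltn q.+1 (isT : (1 < 2)%N).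
case: (trunc_log 2 q.+1) => [|k] lt_q le_q; first by move: lt_q; rewrite expn1; lia.
exists k; move: lt_q le_q; rewrite !expnS; set x := (2 ^ k)%N; clearbody x => lt_q le_q.
split.
  apply: leq_trans le_t; rewrite mulnC leq_mul2r; apply/orP; right; lia.
rewrite -ltnS ltn_divLR // [(x.+1 * d)%N]mulSn.
have lt_t4 : (t < 2 * (2 * (x * d)))%N.
  by rewrite !mulnA (leq_trans lt_t) // leq_mul2r -mulnA (ltnW lt_q) orbT.
have := leq_divM t 8; set y := (x * d)%N in lt_t4 *; set r := (t %/ 8)%N.
by clearbody y r; lia.
Qed.

Lemma alpha_not_all_open_le_pi pi t :
  1 - prob_all_open phi alpha t <=
  (1 - prob_all_open phi pi t) + 4 * (1 - prob_all_open phi pi (t %/ 8)).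
Proof.
have := not_all_open_ge0 pi t; have := not_all_open_ge0 pi (t %/ 8).
have [lt_td|le_dt] := ltnP t d.
  by rewrite (prob_all_open_lt_d pi lt_td); have := not_all_open_le1 alpha t; lra.
have [k [phase_done phase_long]] := alpha_phase le_dt.
have : 1 - prob_all_open phi alpha t <= d%:R * p ((2 * (t %/ 8)) %/ d).
  apply: le_trans (alpha_not_all_open_le phase_done) _.
  by rewrite ler_wpM2l ?ler0n ?p_nonincreasing.
move=> /(not_all_open_lower pi (not_all_open_le1 alpha t)); lra.
Qed.

Local Open Scope ereal_scope.

Lemma exp_time_alpha_le pi : exp_time phi alpha <= 33%:E * exp_time phi pi.
Proof.
have not_all_ge0 pi' t : 0 <= (1 - prob_all_open phi pi' t)%:E.
  by rewrite lee_fin not_all_open_ge0.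
rewrite /exp_time (@le_trans _ _ (\sum_(0 <= t <oo)
    ((1 - prob_all_open phi pi t)%:E + 4%:E * (1 - prob_all_open phi pi (t %/ 8)%N)%:E))) //.
  by apply: lee_nneseries => [t _ _|t _]; rewrite ?not_all_ge0 // -EFinM -EFinD lee_fin
    alpha_not_all_open_le_pi.
rewrite nneseriesD => [|t _ _|t _ _]; rewrite ?mule_ge0 //.
rewrite nneseriesZl => [|t _]; rewrite ?not_all_ge0 //.
set S := \sum_(0 <= t <oo) _.
apply: le_trans.
  apply: leeD2l; apply: lee_wpmul2l; first by rewrite lee_fin.
  exact: (nneseries_divn_le (k := 8) _ (not_all_open_ge0 pi)).
rewrite muleA -EFinM -[X in X + _ <= _]mul1e -ge0_muleDl ?nneseries_ge0 //.
by rewrite lee_wpmul2r ?nneseries_ge0 // -EFinD lee_fin; lra.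
Qed.

Lemma exp_time_alpha_le_opt : exp_time phi alpha <= 33%:E * opt_time phi.
Proof.
have c_gt0 : (0 < 33 :> R)%R by rewrite ltr0n.
have : (33^-1)%:E * exp_time phi alpha <= opt_time phi.
  apply: le_ereal_inf_tmp => _ [pi _ <-].
  apply: le_trans (lee_wpmul2l _ (exp_time_alpha_le pi)) _.
    by rewrite lee_fin invr_ge0 ltW.
  by rewrite muleA -EFinM mulVf ?gt_eqF // mul1e.
move=> /(lee_wpmul2l (ltW c_gt0 : 0 <= 33%:E)); apply: le_trans.
by rewrite muleA -EFinM mulfV ?gt_eqF // mul1e.
Qed.

Local Close Scope ereal_scope.

End Comparison.

Theorem mainTheorem5 (R : realType) :
  exists c1 c2 : R, 0 < c1 /\ 0 < c2 /\
  forall (d : nat) (hd : (2 <= d)%N) (phi : 'I_d -> seq {set 'I_d} -> R),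
    valid_config phi -> finite_expectations phi -> same_fundamental phi ->
    (c1%:E * opt_time phi <= exp_time phi (alpha_knock (ltnW hd)) /\
     exp_time phi (alpha_knock (ltnW hd)) <= c2%:E * opt_time phi)%E.
Proof.
exists 1, 33; do 2!split => //.
move=> d hd phi phi_valid _ phi_same; split.
  by rewrite mul1e; apply: ereal_inf_lbound; exists (alpha_knock (ltnW hd)).
apply: (exp_time_alpha_le_opt phi_valid (p := fund phi (Ordinal (ltnW hd)))) => i n.
exact: phi_same.
Qed.
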